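(* Let $R$ be a $*$-ring and $P(R)$ its prime radical. Then $R$ is strongly $J$-$*$-clean if and only if $R$ is abelian and $R/P(R)$, with the induced involution $(a+P(R))^*=a^*+P(R)$, is strongly $J$-$*$-clean.
   Context: All rings are associative with identity. A $*$-ring is a ring $R$ with an involution $*$, i.e. a map $a\mapsto a^*$ with $(a+b)^*=a^*+b^*$, $(ab)^*=b^*a^*$, $(a^* )^*=a$. The prime radical $P(R)$ is the intersection of all prime ideals of $R$; it satisfies $P(R)^*\subseteq P(R)$, so $R/P(R)$ inherits an involution. $J(S)$ denotes the Jacobson radical of a ring $S$. A projection is an element $e$ with $e^2=e=e^*$. A $*$-ring $S$ is strongly $J$-$*$-clean if every $a\in S$ can be written $a=e+u$ with $e$ a projection, $u\in J(S)$ and $ae=ea$. A ring is abelian if all its idempotents are central. *)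

From HB Require Import structures.
From mathcomp Require Import all_boot all_order all_algebra.
Set Implicit Arguments. Unset Strict Implicit. Unset Printing Implicit Defensive.
Import GRing.Theory.
Local Open Scope ring_scope.

Section StarRings.
Variable R : pzRingType.
Implicit Types (star : R -> R) (I A B L : R -> Prop).

Definition is_involution star : Prop :=
  (forall a b, star (a + b) = star a + star b) /\
  (forall a b, star (a * b) = star b * star a) /\
  (forall a, star (star a) = a).

Definition projection star (e : R) : Prop := e * e = e /\ star e = e.

Definition left_ideal L : Prop :=
  L 0 /\ (forall x y, L x -> L y -> L (x + y)) /\ (forall r x, L x -> L (r * x)).

Definition maximal_left_ideal L : Prop :=
  left_ideal L /\ ~ L 1 /\
  forall L', left_ideal L' -> (forall x, L x -> L' x) ->
    (forall x, L' x -> L x) \/ (forall x, L' x).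

Definition jacobson (x : R) : Prop :=
  forall M, maximal_left_ideal M -> M x.

Definition two_sided_ideal I : Prop :=
  I 0 /\ (forall x y, I x -> I y -> I (x + y)) /\
  (forall r x, I x -> I (r * x)) /\ (forall r x, I x -> I (x * r)).

Definition prime_ideal I : Prop :=
  two_sided_ideal I /\ ~ I 1 /\
  forall A B, two_sided_ideal A -> two_sided_ideal B ->
    (forall a b, A a -> B b -> I (a * b)) ->
    (forall a, A a -> I a) \/ (forall b, B b -> I b).

Definition prime_radical (x : R) : Prop :=
  forall P, prime_ideal P -> P x.

Definition abelian_ring : Prop :=
  forall e : R, e * e = e -> forall x : R, e * x = x * e.

Definition strongly_J_star_clean star : Prop :=
  forall a, exists e u, projection star e /\ jacobson u /\ a = e + u /\ a * e = e * a.

End StarRings.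

(* (S, f) presents S, with involution starS, as the *-ring quotient R/I:
   f is a surjective ring morphism with kernel exactly I, and starS is the
   involution induced by star, i.e. starS (f a) = f (star a). *)
Definition star_quotient (R S : pzRingType) (star : R -> R) (starS : S -> S)
    (I : R -> Prop) (f : {rmorphism R -> S}) : Prop :=
  (forall s : S, exists a : R, f a = s) /\
  (forall a : R, f a = 0 <-> I a) /\
  (forall a : R, starS (f a) = f (star a)).

(* Only if: the clean decomposition e = p + u of an idempotent e consists of
   commuting idempotents differing by an element of J(R), so e = p is a
   projection; then e + e x (1 - e), being idempotent too, is self-adjoint,
   which forces e x (1 - e) = 0, so R is abelian.  Cleanness passes to
   surjective images because J(R) maps into J(S).
   If: P(R) is nil and contained in J(R).  Write the image of a in R/P(R) as
   p + w and lift the projection p to an idempotent e of R (idempotents lift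
   modulo nil ideals, by the Newton iteration x |-> 3x^2 - 2x^3).  Since R is
   abelian, e and e^* are commuting idempotents congruent modulo P(R), a
   subset of J(R), so e = e^*; a - e lies in J(R) because J(R/P(R)) pulls
   back to J(R). *)

From HB Require Import structures.
From mathcomp Require Import all_boot all_order all_algebra.
From mathcomp Require Import boolp classical_sets.
From mathcomp Require Import ring.
Set Implicit Arguments.
Unset Strict Implicit.
Unset Printing Implicit Defensive.
Import GRing.Theory.
Local Open Scope ring_scope.
Local Open Scope classical_set_scope.

Lemma ex_maximal_superset (T : Type) (Q : set T -> Prop) (A0 : set T) :
  (forall F : set (set T), F !=set0 -> F `<=` Q -> total_on F subset ->
     Q (\bigcup_(X in F) X)) ->
  Q A0 -> exists M, [/\ Q M, A0 `<=` M & forall B, Q B -> M `<=` B -> B `<=` M].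
Proof.
move=> Qchain QA0.
pose S := {X : set T | Q X /\ A0 `<=` X}.
pose A0S : S := exist _ A0 (conj QA0 (@subset_refl _ A0)).
pose le (X Y : S) := `[< sval X `<=` sval Y >].
have [| | |[M [QM A0M]] Mmax] := @ZL_preorder S A0S le.
- by move=> X; apply/asboolP.
- by move=> X Y Z /asboolP XY /asboolP YZ; apply/asboolP; apply: subset_trans YZ.
- move=> F Ftot; have [[X0 FX0]|F0] := pselect (F !=set0); last first.
    by exists A0S => X FX; case: F0; exists X.
  pose U := \bigcup_(X in sval @` F) X.
  have QU : Q U.
    apply: Qchain; first by exists (sval X0), X0.
    - by move=> _ [[X XP] _ <-]; case: XP.
    - move=> _ _ [X FX <-] [Y FY <-].
      by have [/asboolP|/asboolP] := Ftot _ _ FX FY; [left|right].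
  have A0U : A0 `<=` U.
    by move=> x A0x; exists (sval X0); [exists X0|apply: (svalP X0).2].
  exists (exist _ U (conj QU A0U)) => X FX; apply/asboolP => x Xx.
  by exists (sval X) => //; exists X.
exists M; split => // B QB MB.
by have /asboolP := Mmax (exist _ B (conj QB (subset_trans A0M MB))) (asboolT MB).
Qed.

Section Ideals.
Variable R : pzRingType.
Implicit Types (A B I L : set R) (x y : R).

Lemma two_sided_left_ideal I : two_sided_ideal I -> left_ideal I.
Proof. by case=> I0 [ID [IMl _]]. Qed.

Lemma left_idealN L x : left_ideal L -> L x -> L (- x).
Proof. by move=> [_ [_ LM]] Lx; rewrite -mulN1r; apply: LM. Qed.

Lemma left_idealB L x y : left_ideal L -> L x -> L y -> L (x - y).
Proof. by move=> hL Lx Ly; case: (hL) => _ [LD _]; apply: LD => //; apply: left_idealN. Qed.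

Lemma left_ideal_bigcup (F : set (set R)) :
  F !=set0 -> F `<=` @left_ideal R -> total_on F subset -> left_ideal (\bigcup_(X in F) X).
Proof.
move=> [X0 FX0] Fl Ftot; split; [|split].
- by exists X0 => //; case: (Fl _ FX0).
- move=> x y [X FX Xx] [Y FY Yy].
  have [XY|YX] := Ftot _ _ FX FY.
  + by exists Y => //; case: (Fl _ FY) => _ [YD _]; apply: YD => //; apply: XY.
  + by exists X => //; case: (Fl _ FX) => _ [XD _]; apply: XD => //; apply: YX.
- by move=> r x [X FX Xx]; exists X => //; case: (Fl _ FX) => _ [_ XM]; apply: XM.
Qed.

Lemma two_sided_ideal_bigcup (F : set (set R)) :
  F !=set0 -> F `<=` @two_sided_ideal R -> total_on F subset ->
  two_sided_ideal (\bigcup_(X in F) X).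
Proof.
move=> F0 Ft Ftot.
have [U0 [UD UMl]] : left_ideal (\bigcup_(X in F) X).
  by apply: left_ideal_bigcup => // X /Ft /two_sided_left_ideal.
split; [by []|split; [by []|split => //]].
by move=> r x [X FX Xx]; exists X => //; case: (Ft _ FX) => _ [_ [_ XM]]; apply: XM.
Qed.

Lemma left_ideal_add A B :
  left_ideal A -> left_ideal B -> left_ideal [set a + b | a in A & b in B].
Proof.
move=> [A0 [AD AM]] [B0 [BD BM]]; split; [|split].
- by exists 0 => //; exists 0; rewrite ?addr0.
- move=> _ _ [a Aa [b Bb <-]] [a' Aa' [b' Bb' <-]].
  by exists (a + a'); [apply: AD|exists (b + b'); [apply: BD|rewrite addrACA]].
- move=> r _ [a Aa [b Bb <-]].
  by exists (r * a); [apply: AM|exists (r * b); [apply: BM|rewrite mulrDr]].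
Qed.

Lemma two_sided_ideal_add A B : two_sided_ideal A -> two_sided_ideal B ->
  two_sided_ideal [set a + b | a in A & b in B].
Proof.
move=> hA hB.
have [S0 [SD SMl]] := left_ideal_add (two_sided_left_ideal hA) (two_sided_left_ideal hB).
split; [by []|split; [by []|split => //]].
case: hA hB => _ [_ [_ AM]] [_ [_ [_ BM]]] r _ [a Aa [b Bb <-]].
by exists (a * r); [apply: AM|exists (b * r); [apply: BM|rewrite mulrDl]].
Qed.

Lemma prime_radical_ideal : two_sided_ideal (@prime_radical R).
Proof.
split; [|split; [|split]].
- by move=> P [[P0 _] _].
- by move=> x y Px Py P hP; case: (hP) => [[_ [PD _]] _]; apply: PD; [apply: Px|apply: Py].
- by move=> r x Px P hP; case: (hP) => [[_ [_ [PM _]]] _]; apply: PM; apply: Px.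
- by move=> r x Px P hP; case: (hP) => [[_ [_ [_ PM]]] _]; apply: PM; apply: Px.
Qed.

End Ideals.

Section Jacobson.
Variable R : pzRingType.
Implicit Types (L M : set R) (x y u e p : R).

Lemma left_ideal_sub_maximal L :
  left_ideal L -> ~ L 1 -> exists M, maximal_left_ideal M /\ L `<=` M.
Proof.
move=> hL L1.
have [M [[hM M1] LM Mmax]] : exists M, [/\ left_ideal M /\ ~ M 1, L `<=` M &
    forall B, left_ideal B /\ ~ B 1 -> M `<=` B -> B `<=` M].
  apply: ex_maximal_superset => // F F0 FQ Ftot; split.
  - by apply: left_ideal_bigcup => // X /FQ[].
  - by move=> [X /FQ[_ X1]].
exists M; split => //; split => //; split => // L' hL' ML'.
have [L'1|L'1] := pselect (L' 1); last by left; apply: Mmax.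
by right => x; rewrite -[x]mulr1; case: hL' => _ [_ L'M]; apply: L'M.
Qed.

Lemma jacobson_mull r x : jacobson x -> jacobson (r * x).
Proof. by move=> Jx M hM; case: (hM) => [[_ [_ MM]] _]; apply: MM; apply: Jx. Qed.

Lemma jacobson_1B_linv u : jacobson u -> exists y, y * (1 - u) = 1.
Proof.
move=> Ju; apply: contrapT => noinv.
pose L := [set r * (1 - u) | r in [set: R]].
have hL : left_ideal L.
  split; [|split].
  - by exists 0; rewrite ?mul0r.
  - by move=> _ _ [r _ <-] [s _ <-]; exists (r + s); rewrite ?mulrDl.
  - by move=> r _ [s _ <-]; exists (r * s); rewrite ?mulrA.
have [M [hM LM]] : exists M, maximal_left_ideal M /\ L `<=` M.
  by apply: left_ideal_sub_maximal => // -[r _ ru1]; apply: noinv; exists r.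
case: (hM) => [[_ [MD _]] [M1 _]].
apply: M1; rewrite -(subrK u 1); apply: MD; last exact: Ju.
by apply: LM; exists 1; rewrite ?mul1r.
Qed.

Lemma jacobson_idem_eq0 x : jacobson x -> x * x = x -> x = 0.
Proof.
move=> Jx xx; have [y yx] := jacobson_1B_linv Jx.
by rewrite -[x]mul1r -yx -mulrA mulrBl mul1r xx subrr mulr0.
Qed.

Lemma idem_jacobson_mul e p : e * e = e -> p * p = p -> e * p = p * e ->
  jacobson (e - p) -> e * p = e.
Proof.
move=> ee pp ep Jep.
have epe : e * p * e = e * p by rewrite -mulrA -ep mulrA ee.
have Jx : jacobson (e - e * p) by rewrite -{1}ee -mulrBr; apply: jacobson_mull.
apply/esym/eqP; rewrite -subr_eq0; apply/eqP/(jacobson_idem_eq0 Jx).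
by rewrite mulrBl !mulrBr !mulrA ee epe -mulrA pp subrr subr0.
Qed.

Lemma idem_jacobson_eq e p : e * e = e -> p * p = p -> e * p = p * e ->
  jacobson (e - p) -> e = p.
Proof.
move=> ee pp ep Jep.
have Jpe : jacobson (p - e) by rewrite -opprB -mulN1r; apply: jacobson_mull.
by rewrite -(idem_jacobson_mul ee pp ep Jep) ep (idem_jacobson_mul pp ee (esym ep) Jpe).
Qed.

End Jacobson.

Section PrimeRadical.
Variable R : pzRingType.
Implicit Types (M : set R) (x : R).

Lemma maximal_left_ideal_core_prime M :
  maximal_left_ideal M -> prime_ideal (fun y => forall r, M (y * r)).
Proof.
move=> [hM [M1 Mmax]]; have [M0 [MD MM]] := hM.
split; [split; [|split; [|split]]|split].
- by move=> r; rewrite mul0r.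
- by move=> y z My Mz r; rewrite mulrDl; apply: MD.
- by move=> s y My r; rewrite -mulrA; apply: MM.
- by move=> s y My r; rewrite -mulrA.
- by move=> /(_ 1); rewrite mulr1.
move=> A B hA hB AB; have [BQ|] := pselect (forall b, B b -> forall r, M (b * r)).
  by right.
move=> /existsNP[b0 /not_implyP[Bb0 /existsNP[s nMb0s]]]; left => a Aa r.
have hBM := left_ideal_add (two_sided_left_ideal hB) hM.
have MBM : M `<=` [set b + m | b in B & m in M].
  by move=> m Mm; exists 0; [case: hB|exists m; rewrite ?add0r].
have [BMM|BMall] := Mmax _ hBM MBM.
  case: nMb0s; apply: BMM; exists (b0 * s); first by case: hB => _ [_ [_ BM]]; apply: BM.
  by exists 0; rewrite ?addr0.
have [b Bb [m Mm <-]] := BMall r.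
by rewrite mulrDr; apply: MD; [rewrite -[a * b]mulr1; apply: AB|apply: MM].
Qed.

Lemma prime_radical_sub_maximal M x : maximal_left_ideal M -> prime_radical x -> M x.
Proof.
by move=> hM /(_ _ (maximal_left_ideal_core_prime hM)) /(_ 1); rewrite mulr1.
Qed.

Lemma prime_radical_jacobson x : prime_radical x -> jacobson x.
Proof. by move=> Px M hM; apply: prime_radical_sub_maximal. Qed.

Lemma power_avoiding_maximal_prime x M :
  two_sided_ideal M -> (forall n, ~ M (x ^+ n)) ->
  (forall B, two_sided_ideal B -> (forall n, ~ B (x ^+ n)) -> M `<=` B -> B `<=` M) ->
  prime_ideal M.
Proof.
move=> hM Mx Mmax; have [M0 [MD [MMl MMr]]] := hM.
split => //; split; first by rewrite -(expr0 x); apply: Mx.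
have power_in_add C : two_sided_ideal C -> ~ C `<=` M ->
    exists n, [set c + m | c in C & m in M] (x ^+ n).
  move=> hC CM; apply: contrapT => /forallNP CMx; apply: CM => c Cc.
  apply: (Mmax _ (two_sided_ideal_add hC hM) CMx).
    by move=> m Mm; exists 0; [case: hC|exists m; rewrite ?add0r].
  by exists c => //; exists 0; rewrite ?addr0.
move=> A B hA hB AB.
have [AM|/(power_in_add _ hA)[i [a Aa [m Mm xi]]]] := pselect (A `<=` M); first by left.
have [BM|/(power_in_add _ hB)[j [b Bb [m' Mm' xj]]]] := pselect (B `<=` M); first by right.
case: (Mx (i + j)%N); rewrite exprD -xi -xj mulrDl !mulrDr.
by apply: (MD); apply: (MD); [apply: AB|apply: MMl|apply: MMr|apply: MMr].
Qed.

Lemma prime_radical_nil x : prime_radical x -> exists n, x ^+ n = 0.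
Proof.
move=> Px; apply: contrapT => /forallNP xn.
have [M [[hM Mx] _ Mmax]] : exists M, [/\ two_sided_ideal M /\ (forall n, ~ M (x ^+ n)),
    [set 0] `<=` M & forall B, two_sided_ideal B /\ (forall n, ~ B (x ^+ n)) ->
      M `<=` B -> B `<=` M].
  apply: ex_maximal_superset => [F F0 FQ Ftot|]; split.
  - by apply: two_sided_ideal_bigcup => // X /FQ[].
  - by move=> n [X /FQ[_ Xx]]; apply: Xx.
  - split; [by []|split; [|split]] => [y z -> ->|r y ->|r y ->]; by rewrite ?addr0 ?mulr0 ?mul0r.
  - by move=> n; apply: xn.
have MP : prime_ideal M.
  by apply: (power_avoiding_maximal_prime hM Mx) => B hB Bx; apply: Mmax.
by case: (Mx 1%N); rewrite expr1; apply: Px M MP.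
Qed.

End PrimeRadical.

Section Involution.
Variables (R : pzRingType) (star : R -> R).
Hypothesis Hstar : is_involution star.

Lemma star0 : star 0 = 0.
Proof. by have [sD _] := Hstar; apply: (addrI (star 0)); rewrite -sD !addr0. Qed.

Lemma starB x y : star (x - y) = star x - star y.
Proof.
have [sD _] := Hstar; rewrite sD; congr (_ + _).
by apply: (addrI (star y)); rewrite -sD !subrr star0.
Qed.

Lemma star1 : star 1 = 1.
Proof. by have [_ [sM sK]] := Hstar; rewrite -[LHS]mulr1 -{2}(sK 1) -sM mulr1 sK. Qed.

Lemma two_sided_ideal_star I : two_sided_ideal I -> two_sided_ideal (I \o star).
Proof.
have [sD [sM _]] := Hstar; move=> [I0 [ID [IMl IMr]]]; split; [|split; [|split]] => /=.
- by rewrite star0.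
- by move=> x y Ix Iy; rewrite sD; apply: ID.
- by move=> r x Ix; rewrite sM; apply: IMr.
- by move=> r x Ix; rewrite sM; apply: IMl.
Qed.

Lemma prime_ideal_star P : prime_ideal P -> prime_ideal (P \o star).
Proof.
have [_ [sM sK]] := Hstar; move=> [hP [P1 Pprime]]; split; first exact: two_sided_ideal_star.
split=> /= [|A B hA hB AB]; first by rewrite star1.
have [hA' hB'] := (two_sided_ideal_star hA, two_sided_ideal_star hB).
have BA b a : B (star b) -> A (star a) -> P (b * a).
  by move=> Bb Aa; rewrite -(sK b) -(sK a) -sM; apply: AB.
have [BP|AP] := Pprime _ _ hB' hA' BA.
- by right => b Bb; apply: BP; rewrite /= sK.
- by left => a Aa; apply: AP; rewrite /= sK.
Qed.

Lemma prime_radical_star x : prime_radical x -> prime_radical (star x).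
Proof. by move=> Px P /prime_ideal_star /Px. Qed.

End Involution.

Section Abelian.
Variables (R : pzRingType) (star : R -> R).
Hypothesis Hstar : is_involution star.

Lemma strongly_J_star_clean_idem_projection e :
  strongly_J_star_clean star -> e * e = e -> star e = e.
Proof.
move=> SJ ee; have [p [u [[pp sp] [Ju [epu ep]]]]] := SJ e.
suff -> : e = p by [].
by apply: idem_jacobson_eq => //; rewrite {1}epu addrC addKr.
Qed.

Lemma idem_projection_abelian :
  (forall e : R, e * e = e -> star e = e) -> abelian_ring R.
Proof.
have [sD [sM _]] := Hstar; move=> proj.
have idem1B (e : R) : e * e = e -> (1 - e) * (1 - e) = 1 - e.
  by move=> ee; rewrite mulrBr mulr1 mulrBl mul1r ee subrr subr0.
have corner0 (e x : R) : e * e = e -> e * x * (1 - e) = 0.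
  move=> ee; set a := e * x * (1 - e).
  have e1e : e * (1 - e) = 0 by rewrite mulrBr mulr1 ee subrr.
  have e1e' : (1 - e) * e = 0 by rewrite mulrBl mul1r ee subrr.
  have ea : e * a = a by rewrite /a !mulrA ee.
  have ae : a * e = 0 by rewrite /a -mulrA e1e' mulr0.
  have aa : a * a = 0 by rewrite {2}/a !mulrA ae !mul0r.
  (* e + a is idempotent, hence self-adjoint. *)
  have idem_ea : (e + a) * (e + a) = e + a by rewrite mulrDl !mulrDr ee ea ae aa !addr0.
  have := proj _ idem_ea; rewrite sD (proj e ee) => /addrI staa.
  by rewrite -ea -staa /a !sM (proj _ ee) (proj _ (idem1B e ee)) !mulrA e1e !mul0r.
move=> e ee x.
have /eqP := corner0 e x ee; rewrite mulrBr mulr1 subr_eq0 => /eqP exe.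
have /eqP := corner0 (1 - e) x (idem1B e ee).
by rewrite subKr mulrBl mulrBl mul1r subr_eq0 => /eqP ->.
Qed.

End Abelian.

Section SurjectiveMorphism.
Variables (R S : pzRingType) (f : {rmorphism R -> S}).
Hypothesis f_surj : forall s, exists a, f a = s.

Lemma left_ideal_preim (L : set S) : left_ideal L -> left_ideal (L \o f).
Proof.
move=> [L0 [LD LM]]; split; [|split] => /=.
- by rewrite rmorph0.
- by move=> x y Lx Ly; rewrite rmorphD; apply: LD.
- by move=> r x Lx; rewrite rmorphM; apply: LM.
Qed.

Lemma left_ideal_image (L : set R) : left_ideal L -> left_ideal (f @` L).
Proof.
move=> [L0 [LD LM]]; split; [|split].
- by exists 0; rewrite ?rmorph0.
- by move=> _ _ [x Lx <-] [y Ly <-]; exists (x + y); [apply: LD|rewrite rmorphD].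
- move=> s _ [x Lx <-]; have [r <-] := f_surj s.
  by exists (r * x); [apply: LM|rewrite rmorphM].
Qed.

Lemma maximal_left_ideal_preim (M : set S) :
  maximal_left_ideal M -> maximal_left_ideal (M \o f).
Proof.
move=> [hM [M1 Mmax]]; split; first exact: left_ideal_preim.
split=> [|L hL ML]; first by rewrite /= rmorph1.
have MfL : M `<=` f @` L.
  by move=> s Ms; have [r fr] := f_surj s; exists r => //; apply: ML; rewrite /= fr.
have [fLM|fLall] := Mmax _ (left_ideal_image hL) MfL.
  by left => x Lx; apply: fLM; exists x.
right=> r; have [l Ll fl] := fLall 1.
have Ll1 : L (l - 1) by apply: ML; rewrite /= rmorphB fl rmorph1 subrr; case: hM.
have L1 : L 1 by rewrite -(subKr l 1); apply: left_idealB.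
by rewrite -[r]mulr1; case: hL => _ [_ LM]; apply: LM.
Qed.

Lemma maximal_left_ideal_image (M : set R) : (forall a, f a = 0 -> M a) ->
  maximal_left_ideal M -> maximal_left_ideal (f @` M).
Proof.
move=> kerM [hM [M1 Mmax]].
have M_fibre m x : M m -> f m = f x -> M x.
  move=> Mm fmx; rewrite -(subKr m x); apply: left_idealB => //.
  by apply: kerM; rewrite rmorphB fmx subrr.
split; first exact: left_ideal_image.
split=> [[m Mm fm1]|L hL ML]; first by apply: M1; apply: M_fibre Mm _; rewrite rmorph1.
have MpL : M `<=` L \o f by move=> m Mm; apply: ML; exists m.
have [pLM|pLall] := Mmax _ (left_ideal_preim hL) MpL.
  left => s Ls; have [r fr] := f_surj s.
  by exists r => //; apply: pLM; rewrite /= fr.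
by right => s; have [r <-] := f_surj s; apply: pLall.
Qed.

Lemma jacobson_rmorph x : jacobson x -> jacobson (f x).
Proof. by move=> Jx M /maximal_left_ideal_preim /Jx. Qed.

Lemma jacobson_rmorph_reflect x : (forall a, f a = 0 -> jacobson a) ->
  jacobson (f x) -> jacobson x.
Proof.
move=> kerJ Jfx M hM; have kerM a (fa0 : f a = 0) : M a := kerJ a fa0 M hM.
have [m Mm fmx] := Jfx _ (maximal_left_ideal_image kerM hM).
rewrite -(subKr m x); apply: left_idealB; [by case: hM|by []|].
by apply: kerM; rewrite rmorphB fmx subrr.
Qed.

End SurjectiveMorphism.

Local Open Scope quotient_scope.

(* ring_quotient only quotients commutative rings, so the quotient by a
   two-sided ideal is built directly on the generic quotient. *)
Section IdealQuotient.
Variables (R : pzRingType) (I : set R).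
Hypothesis idealI : two_sided_ideal I.

Definition ideal_eqv (x y : R) : bool := `[< I (x - y) >].

Lemma ideal_eqv_equiv : equiv_class_of ideal_eqv.
Proof.
split=> [x|x y|y x z]; rewrite /ideal_eqv.
- by apply/asboolP; rewrite subrr; case: idealI.
- have Isym u v : I (u - v) -> I (v - u).
    by move=> Iuv; rewrite -opprB; apply: left_idealN (two_sided_left_ideal idealI) Iuv.
  by apply/asboolP/asboolP; apply: Isym.
- move=> /asboolP Ixy /asboolP Iyz; apply/asboolP.
  by rewrite -(subrKA y); case: idealI => _ [ID _]; apply: ID.
Qed.

Canonical ideal_eqv_equivRel := EquivRelPack ideal_eqv_equiv.
Canonical ideal_eqv_encModRel := defaultEncModRel ideal_eqv.

Definition ideal_quot := {eq_quot ideal_eqv}.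
HB.instance Definition _ : EqQuotient R ideal_eqv ideal_quot :=
  EqQuotient.on ideal_quot.
HB.instance Definition _ := Choice.on ideal_quot.

Local Notation Q := ideal_quot.
Local Notation pi := (\pi_Q : R -> Q).

Lemma pi_eq x y : pi x = pi y <-> I (x - y).
Proof.
split=> [/eqP|Ixy]; first by rewrite piE => /asboolP.
by apply/eqP; rewrite piE; apply/asboolP.
Qed.

Lemma repr_piB x : I (repr (pi x) - x).
Proof. by apply/pi_eq; rewrite reprK. Qed.

Lemma pi_ind (P : Q -> Prop) : (forall x, P (pi x)) -> forall s, P s.
Proof. by move=> Ppi s; rewrite -[s]reprK; apply: Ppi. Qed.

Definition qadd (s t : Q) : Q := pi (repr s + repr t).
Definition qopp (s : Q) : Q := pi (- repr s).
Definition qmul (s t : Q) : Q := pi (repr s * repr t).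

Lemma qaddE x y : qadd (pi x) (pi y) = pi (x + y).
Proof.
apply/pi_eq; rewrite opprD addrACA; case: idealI => _ [ID _].
by apply: ID; apply: repr_piB.
Qed.

Lemma qoppE x : qopp (pi x) = pi (- x).
Proof.
apply/pi_eq; rewrite -opprD; apply: (left_idealN (two_sided_left_ideal idealI)).
exact: repr_piB.
Qed.

Lemma qmulE x y : qmul (pi x) (pi y) = pi (x * y).
Proof.
apply/pi_eq; case: idealI => _ [ID [IMl IMr]].
rewrite -(subrKA (repr (pi x) * y)) -mulrBr -mulrBl.
by apply: ID; [apply: IMl|apply: IMr]; apply: repr_piB.
Qed.

Lemma qaddA : associative qadd.
Proof. by elim/pi_ind=> x; elim/pi_ind=> y; elim/pi_ind=> z; rewrite !qaddE addrA. Qed.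
Lemma qaddC : commutative qadd.
Proof. by elim/pi_ind=> x; elim/pi_ind=> y; rewrite !qaddE addrC. Qed.
Lemma qadd0 : left_id (pi 0) qadd.
Proof. by elim/pi_ind=> x; rewrite qaddE add0r. Qed.
Lemma qaddN : left_inverse (pi 0) qopp qadd.
Proof. by elim/pi_ind=> x; rewrite qoppE qaddE addNr. Qed.

HB.instance Definition _ := GRing.isZmodule.Build Q qaddA qaddC qadd0 qaddN.

Lemma qmulA : associative qmul.
Proof. by elim/pi_ind=> x; elim/pi_ind=> y; elim/pi_ind=> z; rewrite !qmulE mulrA. Qed.
Lemma qmul1 : left_id (pi 1) qmul.
Proof. by elim/pi_ind=> x; rewrite qmulE mul1r. Qed.
Lemma qmulr1 : right_id (pi 1) qmul.
Proof. by elim/pi_ind=> x; rewrite qmulE mulr1. Qed.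
Lemma qmulDl : left_distributive qmul qadd.
Proof. by elim/pi_ind=> x; elim/pi_ind=> y; elim/pi_ind=> z; rewrite !(qaddE, qmulE) mulrDl. Qed.
Lemma qmulDr : right_distributive qmul qadd.
Proof. by elim/pi_ind=> x; elim/pi_ind=> y; elim/pi_ind=> z; rewrite !(qaddE, qmulE) mulrDr. Qed.

HB.instance Definition _ :=
  GRing.Zmodule_isPzRing.Build Q qmulA qmul1 qmulr1 qmulDl qmulDr.

Definition ideal_pi : R -> Q := pi.

Lemma ideal_pi_zmod_morphism : zmod_morphism ideal_pi.
Proof. by move=> x y; rewrite -[RHS]/(qadd (pi x) (qopp (pi y))) qoppE qaddE. Qed.
HB.instance Definition _ :=
  GRing.isZmodMorphism.Build R Q ideal_pi ideal_pi_zmod_morphism.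

Lemma ideal_pi_monoid_morphism : monoid_morphism ideal_pi.
Proof. by split => // x y; rewrite -[RHS]/(qmul (pi x) (pi y)) qmulE. Qed.
HB.instance Definition _ :=
  GRing.isMonoidMorphism.Build R Q ideal_pi ideal_pi_monoid_morphism.

Lemma ideal_pi_surj (s : Q) : ideal_pi (repr s) = s.
Proof. exact: reprK. Qed.

Lemma ideal_pi_eq0 x : ideal_pi x = 0 <-> I x.
Proof. by rewrite -(rmorph0 ideal_pi) /ideal_pi pi_eq subr0. Qed.

End IdealQuotient.

Section QuotientInvolution.
Variables (R : pzRingType) (star : R -> R) (I : set R).
Hypotheses (Hstar : is_involution star) (idealI : two_sided_ideal I).
Hypothesis starI : forall x, I x -> I (star x).

Definition ideal_quot_star (s : ideal_quot idealI) : ideal_quot idealI :=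
  ideal_pi idealI (star (repr s)).

Lemma star_quotient_ideal_quot :
  star_quotient star ideal_quot_star I (ideal_pi idealI).
Proof.
split; first by move=> s; exists (repr s); apply: ideal_pi_surj.
split=> a; first exact: ideal_pi_eq0.
apply/eqP; rewrite -subr_eq0 -rmorphB; apply/eqP/ideal_pi_eq0.
rewrite -starB //; apply/starI/(ideal_pi_eq0 idealI).
by rewrite rmorphB /= ideal_pi_surj subrr.
Qed.

End QuotientInvolution.

Local Close Scope quotient_scope.

Section NewtonStep.
Variable R : comPzRingType.
Implicit Type p : R.

Definition newton_step p := 3%:R * p ^+ 2 - 2%:R * p ^+ 3.

Lemma newton_step_defect p :
  newton_step p - newton_step p ^+ 2 = (p - p ^+ 2) ^+ 2 * (3%:R + 4%:R * (p - p ^+ 2)).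
Proof. rewrite /newton_step; ring. Qed.

Lemma newton_step_sub p : newton_step p - p = (p - p ^+ 2) * (2%:R * p - 1).
Proof. rewrite /newton_step; ring. Qed.

End NewtonStep.

Definition newton_idem (k : nat) : {poly int} := iter k (@newton_step _) 'X.

Lemma newton_idem_defect k : exists c,
  newton_idem k - newton_idem k ^+ 2 = ('X - 'X ^+ 2) ^+ (2 ^ k) * c.
Proof.
elim: k => [|k [c IHc]]; first by exists 1; rewrite expn0 expr1 mulr1.
exists (c ^+ 2 * (3%:R + 4%:R * (newton_idem k - newton_idem k ^+ 2))).
by rewrite /= newton_step_defect IHc expnS mul2n -addnn exprD exprMn mulrA.
Qed.

Lemma newton_idem_subX k : exists c, newton_idem k - 'X = ('X - 'X ^+ 2) * c.
Proof.
elim: k => [|k [c IHc]]; first by exists 0; rewrite subrr mulr0.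
have [d defect_k] := newton_idem_defect k.
have -> : newton_idem k.+1 - 'X =
    (newton_step (newton_idem k) - newton_idem k) + (newton_idem k - 'X).
  by rewrite addrA subrK.
rewrite newton_step_sub defect_k IHc -(prednK (expn_gt0 2 k)) exprS.
by exists (('X - 'X ^+ 2) ^+ (2 ^ k).-1 * d * (2%:R * newton_idem k - 1) + c); ring.
Qed.

Lemma idempotent_lift_nilpotent (R : nzRingType) (b : R) n : (b - b * b) ^+ n = 0 ->
  exists2 e : R, e * e = e & exists c, e - b = (b - b * b) * c.
Proof.
move=> nil_b.
have bint : commr_rmorph (intr : int -> R) b by move=> z; apply: commr_int.
pose ev : {rmorphism {poly int} -> R} := horner_morph bint.
have evX : ev 'X = b := horner_morphX bint.
have ev_defect : ev ('X - 'X ^+ 2) = b - b * b by rewrite rmorphB rmorphXn evX expr2.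
exists (ev (newton_idem n)).
  have [c defect_n] := newton_idem_defect n.
  have n_le : (n <= 2 ^ n)%N by apply: ltnW; apply: ltn_expl.
  apply/esym/eqP; rewrite -subr_eq0 -expr2 -rmorphXn -rmorphB defect_n rmorphM rmorphXn.
  by rewrite ev_defect -(subnKC n_le) exprD nil_b !mul0r.
have [c sub_n] := newton_idem_subX n.
by exists (ev c); rewrite -ev_defect -rmorphM -sub_n rmorphB evX.
Qed.

Lemma idempotent_lift (R : pzRingType) (I : set R) :
  two_sided_ideal I -> (forall x, I x -> exists n, x ^+ n = 0) ->
  forall b, I (b - b * b) -> exists2 e, e * e = e & I (e - b).
Proof.
move=> idealI nilI b Ib; have [n nil_b] := nilI _ Ib.
(* Polynomial evaluation needs a nontrivial ring; the zero ring is trivial. *)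
have [R0|R1] := eqVneq (1 : R) 0.
  by exists 0; rewrite ?mul0r // -[_ - b]mul1r R0 mul0r; case: idealI.
pose R' : nzRingType := HB.pack R (GRing.PzSemiRing_isNonZero.Build R R1).
have [e ee [c ec]] := @idempotent_lift_nilpotent R' b n nil_b.
by exists e => //; rewrite ec; case: idealI => _ [_ [_ IMr]]; apply: IMr.
Qed.

Lemma strongly_J_star_clean_image (R S : pzRingType) (star : R -> R) (starS : S -> S)
    (f : {rmorphism R -> S}) :
  (forall s, exists a, f a = s) -> (forall a, starS (f a) = f (star a)) ->
  strongly_J_star_clean star -> strongly_J_star_clean starS.
Proof.
move=> f_surj starf SJ s; have [a <-] := f_surj s.
have [e [u [[ee se] [Ju [aeu ae]]]]] := SJ a.
exists (f e), (f u); split; first by split; rewrite ?starf ?se -?rmorphM ?ee.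
split; first exact: jacobson_rmorph.
by split; [rewrite aeu rmorphD|rewrite -!rmorphM ae].
Qed.

Lemma strongly_J_star_clean_lift (R S : pzRingType) (star : R -> R) (starS : S -> S)
    (I : set R) (f : {rmorphism R -> S}) :
  is_involution star -> abelian_ring R -> two_sided_ideal I ->
  (forall x, I x -> exists n, x ^+ n = 0) -> I `<=` @jacobson R ->
  star_quotient star starS I f -> strongly_J_star_clean starS ->
  strongly_J_star_clean star.
Proof.
move=> [_ [sM _]] ab idealI nilI IJ [f_surj [kerI starf]] SJS a.
have [p [w [[pp sp] [Jw [apw _]]]]] := SJS (f a).
have [b fb] := f_surj p.
have Ib : I (b - b * b) by apply/kerI; rewrite rmorphB rmorphM fb pp subrr.
have [e ee Ieb] := idempotent_lift idealI nilI Ib.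
have fe : f e = p by apply/eqP; rewrite -subr_eq0 -fb -rmorphB; apply/eqP/kerI.
have se : star e = e.
  apply: idem_jacobson_eq; [by rewrite -sM ee|by []|exact/esym/ab|apply: IJ; apply/kerI].
  by rewrite rmorphB -starf fe sp subrr.
exists e, (a - e); split; first by [].
split; first apply: (jacobson_rmorph_reflect f_surj).
- by move=> x /kerI /IJ.
- by rewrite rmorphB fe apw addrC addKr.
by split; [rewrite addrC subrK|apply/esym/ab].
Qed.

Theorem corollary3p9 (R : pzRingType) (star : R -> R) (Hstar : is_involution star) :
  strongly_J_star_clean star <->
  (abelian_ring R /\
   forall (S : pzRingType) (starS : S -> S) (f : {rmorphism R -> S}),
     star_quotient star starS (@prime_radical R) f ->
     strongly_J_star_clean starS).
Proof.
split=> [SJ|[ab SJquot]].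
  split=> [|S starS f [f_surj [_ starf]]]; last exact: strongly_J_star_clean_image SJ.
  by apply: idem_projection_abelian Hstar _ => e; apply: strongly_J_star_clean_idem_projection.
have idealP := prime_radical_ideal R.
have quotP := star_quotient_ideal_quot Hstar idealP (prime_radical_star Hstar).
apply: strongly_J_star_clean_lift Hstar ab idealP _ _ quotP (SJquot _ _ _ quotP).
- exact: prime_radical_nil.
- exact: prime_radical_jacobson.
Qed.
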